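(* Let $R$ be a commutative noetherian ring, let $\mathcal S$ be a Serre subcategory of $R$-modules and let $\mathfrak p$ be a prime ideal of $R$ such that $E(R/\mathfrak p)\in\mathcal N\mathcal S$. Then $E(R/\mathfrak p)\in\mathcal S$ if either $\mathrm{ht}\,\mathfrak p>0$, or $\mathrm{ht}\,\mathfrak p=0$ and $R/\mathfrak p\in\mathcal S$.
   Context: $E(R/\mathfrak p)$ is the injective envelope of $R/\mathfrak p$. A Serre subcategory is closed under submodules, quotients and extensions. $\mathcal N\mathcal S$ is the class of modules $M$ with an exact sequence $0\to N\to M\to S\to0$, $N$ finitely generated, $S\in\mathcal S$. *)

From HB Require Import structures.
From mathcomp Require Import all_boot all_algebra.
Set Implicit Arguments. Unset Strict Implicit. Unset Printing Implicit Defensive.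
Import GRing.Theory.
Local Open Scope ring_scope.

Section CommAlg.
Variable R : comNzRingType.

Definition is_ideal (I : R -> Prop) : Prop :=
  [/\ I 0, (forall a b, I a -> I b -> I (a + b)) & (forall r a, I a -> I (r * a))].

Definition ideal_fg (I : R -> Prop) : Prop :=
  exists (n : nat) (g : 'I_n -> R),
    (forall i, I (g i)) /\
    (forall a, I a <-> exists c : 'I_n -> R, a = \sum_(i < n) c i * g i).

Definition noetherian_ring : Prop := forall I, is_ideal I -> ideal_fg I.

Definition prime_ideal (p : R -> Prop) : Prop :=
  [/\ is_ideal p, ~ p 1 & (forall a b, p (a * b) -> p a \/ p b)].

Definition strict_sub (p q : R -> Prop) : Prop :=
  (forall a, p a -> q a) /\ exists a, q a /\ ~ p a.

Definition height_ge (p : R -> Prop) (n : nat) : Prop :=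
  exists c : nat -> (R -> Prop),
    (forall i, (i <= n)%N -> prime_ideal (c i)) /\
    (forall i, (i < n)%N -> strict_sub (c i) (c i.+1)) /\
    (forall a, c n a <-> p a).

Definition height_pos (p : R -> Prop) : Prop := height_ge p 1.
Definition height_zero (p : R -> Prop) : Prop := ~ height_ge p 1.

Definition submodule (M : lmodType R) (N : M -> Prop) : Prop :=
  [/\ N 0, (forall x y, N x -> N y -> N (x + y)) & (forall r x, N x -> N (r *: x))].

Definition module_fg (M : lmodType R) : Prop :=
  exists (n : nat) (g : 'I_n -> M),
    forall m, exists c : 'I_n -> R, m = \sum_(i < n) c i *: g i.

(* M is isomorphic to R/p, witnessed by a generator x with annihilator p *)
Definition cyclic_with_ann (M : lmodType R) (p : R -> Prop) (x : M) : Prop :=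
  (forall m, exists r, m = r *: x) /\ (forall r, r *: x = 0 <-> p r).

Definition iso_R_mod (M : lmodType R) (p : R -> Prop) : Prop :=
  exists x : M, cyclic_with_ann p x.

Definition short_exact (N M K : lmodType R)
    (f : {linear N -> M}) (g : {linear M -> K}) : Prop :=
  [/\ injective f, (forall k, exists m, g m = k) &
      (forall m, g m = 0 <-> exists n, f n = m)].

Definition injective_module (E : lmodType R) : Prop :=
  forall (A B : lmodType R) (f : {linear A -> B}) (g : {linear A -> E}),
    injective f -> exists h : {linear B -> E}, forall a, h (f a) = g a.

(* E is an injective envelope E(R/p): E is injective and contains a
   submodule Rx isomorphic to R/p which is essential in E. *)
Definition injective_envelope_Rp (p : R -> Prop) (E : lmodType R) : Prop :=
  injective_module E /\
  exists x : E, (forall r, r *: x = 0 <-> p r) /\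
    forall N : E -> Prop, submodule N -> (exists n, N n /\ n <> 0) ->
      exists n, [/\ N n, (exists r, n = r *: x) & n <> 0].

Definition serre_subcategory (S : lmodType R -> Prop) : Prop :=
  [/\ (forall (N M : lmodType R) (f : {linear N -> M}), injective f -> S M -> S N),
      (forall (M K : lmodType R) (g : {linear M -> K}),
          (forall k, exists m, g m = k) -> S M -> S K) &
      (forall (N M K : lmodType R) (f : {linear N -> M}) (g : {linear M -> K}),
          short_exact f g -> S N -> S K -> S M)].

Definition NS_class (S : lmodType R -> Prop) (M : lmodType R) : Prop :=
  exists (N K : lmodType R) (f : {linear N -> M}) (g : {linear M -> K}),
    [/\ short_exact f g, module_fg N & S K].

End CommAlg.

From HB Require Import structures.
From mathcomp Require Import all_boot all_algebra boolp.
Import GRing.Theory.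
Set Implicit Arguments. Unset Strict Implicit. Unset Printing Implicit Defensive.
Local Open Scope ring_scope.

(* Let x generate the essential copy of R/p in E = E(R/p) and let
   0 -> N -> E -> K -> 0 with N finitely generated and K in S.
   First, Rx ~ R/p lies in S. When ht p = 0 this is assumed. When ht p > 0, pick a in p outside a smaller prime q. Every
   element of E is killed by a power of each element of p, so some a^m kills
   N; since a^m is regular modulo q and E is injective, x = a^m e for some e.
   The image of e in K has its annihilator inside p and is p-torsion, so one of
   its multiples has annihilator exactly p: R/p embeds into K.
   Next, every cyclic submodule Re of E lies in S, by noetherian induction on
   ann e: some multiple te has annihilator p, and Re is an extension of
   Rte ~ R/p by pe = sum R g_i e, where the g_i generate p and each g_i e has
   a strictly larger annihilator than e.
   Hence the finitely generated submodule N lies in S, and so does E. *)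

Section SubmoduleType.
Variables (R : comNzRingType) (M : lmodType R) (P : M -> Prop).

(* [hP] is unused in the body, but it makes the closure proof reachable by
   the canonical lmodType instance below. *)
Definition submod_type (hP : submodule P) := {x : M | `[< P x >]}.

Variable hP : submodule P.

HB.instance Definition _ := [isSub of submod_type hP for @sval M _].
HB.instance Definition _ := [Choice of submod_type hP by <:].

Lemma submodule_closed : subsemimod_closed (fun x : M => `[< P x >]).
Proof.
case: hP => P0 PD PZ; split; first split.
- exact/asboolP.
- by move=> u v /asboolP Pu /asboolP Pv; apply/asboolP/PD.
- by move=> a u /asboolP Pu; apply/asboolP/PZ.
Qed.

HB.instance Definition _ :=
  GRing.SubChoice_isSubLmodule.Build R M _ (submod_type hP) submodule_closed.

Lemma submod_valP (y : submod_type hP) : P (val y).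
Proof. exact/asboolP/(valP y). Qed.

Definition submod_elt (y : M) (Py : P y) : submod_type hP :=
  Sub y (introT (asboolP _) Py).

Lemma submod_eltK (y : M) (Py : P y) : val (submod_elt Py) = y.
Proof. by []. Qed.

End SubmoduleType.

Section LinearFun.
Variables (R : comNzRingType) (A B : lmodType R) (f : A -> B).

Definition linear_fun (f_lin : linear f) := f.

Variable f_lin : linear f.
HB.instance Definition _ := GRing.isLinear.Build R A B *:%R (linear_fun f_lin) f_lin.

End LinearFun.

Section Submodules.
Variables (R : comNzRingType) (M : lmodType R).

Definition cyclic (e : M) : M -> Prop := fun y => exists r, y = r *: e.

Definition addsub (P Q : M -> Prop) : M -> Prop :=
  fun y => exists a b, [/\ P a, Q b & y = a + b].

Definition ideal_mul (I : R -> Prop) (e : M) : M -> Prop :=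
  fun y => exists2 c, I c & y = c *: e.

Fixpoint span (s : seq M) : M -> Prop :=
  if s is v :: s' then addsub (cyclic v) (span s') else eq 0.

Lemma zero_submodule : submodule (@eq M 0).
Proof.
by split=> // [_ _ <- <-|r _ <-]; rewrite ?addr0 ?scaler0.
Qed.

Lemma cyclic_submodule e : submodule (cyclic e).
Proof.
split; first by exists 0; rewrite scale0r.
- by move=> _ _ [r ->] [s ->]; exists (r + s); rewrite scalerDl.
- by move=> c _ [r ->]; exists (c * r); rewrite scalerA.
Qed.

Lemma addsub_submodule P Q : submodule P -> submodule Q -> submodule (addsub P Q).
Proof.
move=> [P0 PD PZ] [Q0 QD QZ]; split; first by exists 0, 0; rewrite addr0.
- move=> _ _ [a [b [Pa Qb ->]]] [a' [b' [Pa' Qb' ->]]].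
  by exists (a + a'), (b + b'); rewrite addrACA; split; [apply: PD | apply: QD |].
- move=> r _ [a [b [Pa Qb ->]]].
  by exists (r *: a), (r *: b); rewrite scalerDr; split; [apply: PZ | apply: QZ |].
Qed.

Lemma ideal_mul_submodule I e : is_ideal I -> submodule (ideal_mul I e).
Proof.
case=> I0 ID IM; split; first by exists 0; rewrite ?scale0r.
- by move=> _ _ [a Ia ->] [b Ib ->]; exists (a + b); rewrite ?scalerDl //; apply: ID.
- by move=> r _ [a Ia ->]; exists (r * a); rewrite ?scalerA //; apply: IM.
Qed.

Fixpoint span_submodule (s : seq M) : submodule (span s) :=
  if s is v :: s' then addsub_submodule (cyclic_submodule v) (span_submodule s')
  else zero_submodule.

Lemma span_sum (I : Type) (w : I -> M) (c : I -> R) (s : seq I) :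
  span (map w s) (\sum_(i <- s) c i *: w i).
Proof.
elim: s => [|i s IH] /=; first by rewrite big_nil.
exists (c i *: w i), (\sum_(j <- s) c j *: w j).
by rewrite big_cons; split=> //; exists (c i).
Qed.

End Submodules.

Notation cyclic_mod e := (submod_type (cyclic_submodule e)).
Notation span_mod s := (submod_type (span_submodule s)).

Definition ann (R : comNzRingType) (M : lmodType R) (m : M) : R -> Prop :=
  fun c => c *: m = 0.

Section Annihilator.
Variables (R : comNzRingType) (M : lmodType R).

Lemma ann_ideal (m : M) : is_ideal (ann m).
Proof.
split; first exact: scale0r.
- by move=> a b ha hb; rewrite /ann scalerDl ha hb addr0.
- by move=> r a ha; rewrite /ann -scalerA ha scaler0.
Qed.

Lemma ann_submod_elt (P : M -> Prop) (hP : submodule P) (y : M) (Py : P y) c :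
  ann (submod_elt hP Py) c <-> ann y c.
Proof. by split=> [/(congr1 val) | ann_y]; last apply: val_inj. Qed.

Lemma scaler_comm (a b : R) (m : M) : a *: (b *: m) = b *: (a *: m).
Proof. by rewrite !scalerA mulrC. Qed.

Lemma ann_scale_le (a : R) (m : M) c : ann m c -> ann (a *: m) c.
Proof. by rewrite /ann scaler_comm => ->; rewrite scaler0. Qed.

Lemma cyclic_hom (N : lmodType R) (m : M) (n : N) :
    (forall c, ann m c -> ann n c) ->
  exists phi : {linear cyclic_mod m -> N},
    forall r (y : cyclic_mod m), val y = r *: m -> phi y = r *: n.
Proof.
move=> ann_mn.
pose coef (y : cyclic_mod m) : R := projT1 (cid (submod_valP y)).
have coefP y : val y = coef y *: m by rewrite /coef; case: cid.
have coef_eq r y : val y = r *: m -> coef y *: n = r *: n.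
  move=> ym; apply/eqP; rewrite -subr_eq0 -scalerBl; apply/eqP/ann_mn.
  by rewrite /ann scalerBl -coefP -ym subrr.
have phi_lin : linear (fun y => coef y *: n).
  move=> a u v /=; rewrite (coef_eq (a * coef u + coef v)) ?scalerDl ?scalerA //.
  by rewrite -scalerA -!coefP.
by exists (linear_fun phi_lin) => r y; apply: coef_eq.
Qed.

End Annihilator.

Section Serre.
Variables (R : comNzRingType) (S : lmodType R -> Prop).
Hypothesis hS : serre_subcategory S.

Lemma serre_sub (A B : lmodType R) (f : {linear A -> B}) :
  (forall a, f a = 0 -> a = 0) -> S B -> S A.
Proof. by case: hS => sub _ _ /raddf_inj; apply: sub. Qed.

Lemma serre_quo (A B : lmodType R) (f : {linear A -> B}) :
  (forall b, exists a, f a = b) -> S A -> S B.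
Proof. by case: hS => _ quo _; apply: quo. Qed.

Lemma serre_trivial (A B : lmodType R) : (forall a : A, a = 0) -> S B -> S A.
Proof.
move=> A0; have zero_lin : linear (fun _ : A => 0 : B).
  by move=> r u v; rewrite scaler0 addr0.
by apply: (serre_sub (f := linear_fun zero_lin)) => a _; apply: A0.
Qed.

Lemma serre_prod (A B : lmodType R) : S A -> S B -> S (A * B)%type.
Proof.
have inl_lin : linear (fun a : A => (a, 0 : B)).
  by move=> r u v; rewrite -[RHS]/(r *: u + v, r *: 0 + 0) scaler0 addr0.
have snd_lin : linear (fun y : A * B => y.2) by [].
case: hS => _ _ ext; apply: (ext _ _ _ (linear_fun inl_lin) (linear_fun snd_lin)).
split=> [a a' [] // | b | [a b]]; first by exists (0, b).
by split=> [b0 | [a' [<- <-]] //]; exists a; rewrite -[b]/(linear_fun snd_lin (a, b)) b0.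
Qed.

Lemma serre_submod_le (M : lmodType R) (P Q : M -> Prop)
    {hP : submodule P} {hQ : submodule Q} :
  (forall y, P y -> Q y) -> S (submod_type hQ) -> S (submod_type hP).
Proof.
move=> PQ; pose incl (y : submod_type hP) := submod_elt hQ (PQ _ (submod_valP y)).
have incl_lin : linear incl by move=> r u v; apply: val_inj.
apply: (serre_sub (f := linear_fun incl_lin)) => a a0; apply: val_inj.
exact: (congr1 val a0).
Qed.

Lemma serre_addsub (M : lmodType R) (P Q : M -> Prop)
    (hP : submodule P) (hQ : submodule Q) :
  S (submod_type hP) -> S (submod_type hQ) -> S (submod_type (addsub_submodule hP hQ)).
Proof.
move=> SP SQ.
have sum_in (y : submod_type hP * submod_type hQ) : addsub P Q (val y.1 + val y.2).
  by exists (val y.1), (val y.2); split=> //; apply: submod_valP.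
pose sum y := submod_elt (addsub_submodule hP hQ) (sum_in y).
have sum_lin : linear sum.
  by move=> r [u1 u2] [v1 v2]; apply: val_inj; rewrite /= scalerDr addrACA.
apply: (serre_quo (f := linear_fun sum_lin)); last exact: serre_prod.
move=> y; have [a [b [Pa Qb y_ab]]] := submod_valP y.
by exists (submod_elt hP Pa, submod_elt hQ Qb); apply: val_inj.
Qed.

Lemma serre_span (M K : lmodType R) (s : seq M) :
  (forall v, v \in s -> S (cyclic_mod v)) -> S K -> S (span_mod s).
Proof.
move=> Ss SK; elim: s Ss => [|v s IH] Ss.
  by apply: serre_trivial SK => a; apply: val_inj; rewrite -(submod_valP a).
apply: serre_addsub; first by apply: Ss; rewrite inE eqxx.
by apply: IH => w ws; apply: Ss; rewrite inE ws orbT.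
Qed.

Lemma serre_cyclic_ann (M N : lmodType R) (m : M) (n : N) :
  (forall c, ann m c <-> ann n c) -> S N -> S (cyclic_mod m).
Proof.
move=> ann_mn; have [phi phiP] := cyclic_hom (fun c => (ann_mn c).1).
apply: (serre_sub (f := phi)) => y y0; have [r yr] := submod_valP y.
by apply: val_inj; rewrite /= yr; apply/ann_mn; rewrite /ann -(phiP r y yr) y0.
Qed.

Lemma serre_cyclic_extension (M : lmodType R) (e : M) (t : R) :
    S (submod_type (ideal_mul_submodule e (ann_ideal (t *: e)))) ->
    S (cyclic_mod (t *: e)) -> S (cyclic_mod e).
Proof.
move=> SIe Ste.
have incl_in (y : submod_type (ideal_mul_submodule e (ann_ideal (t *: e)))) :
    cyclic e (val y).
  by have [c _ ->] := submod_valP y; exists c.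
pose incl y := submod_elt (cyclic_submodule e) (incl_in y).
have mul_in (y : cyclic_mod e) : cyclic (t *: e) (t *: val y).
  by have [c ->] := submod_valP y; exists c; rewrite scaler_comm.
pose mul y := submod_elt (cyclic_submodule (t *: e)) (mul_in y).
have incl_lin : linear incl by move=> r u v; apply: val_inj.
have mul_lin : linear mul by move=> r u v; apply: val_inj; rewrite /= scalerDr scaler_comm.
case: hS => _ _ ext; apply: (ext _ _ _ (linear_fun incl_lin) (linear_fun mul_lin)) => //.
split.
- by move=> u v /(congr1 val) uv; apply: val_inj.
- move=> y; have [c yc] := submod_valP y.
  exists (submod_elt (cyclic_submodule e) (ex_intro _ c erefl)).
  by apply: val_inj; rewrite /= yc scaler_comm.
- move=> y; have [c yc] := submod_valP y; split.
  + move=> /(congr1 val) /=; rewrite yc scaler_comm => Ic.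
    by exists (submod_elt _ (ex_intro2 _ _ c Ic erefl)); apply: val_inj.
  + case=> u <-; apply: val_inj; have [c' Ic' /= ->] := submod_valP u.
    by rewrite scaler_comm.
Qed.

Lemma serre_fg (M N K : lmodType R) (f : {linear N -> M}) :
  (forall v : M, S (cyclic_mod v)) -> S K ->
  module_fg N -> injective f -> S N.
Proof.
move=> Scyc SK [n [gen gen_span]] f_inj.
set s := map (fun i => f (gen i)) (index_enum 'I_n).
have f_in y : span s (f y).
  have [c ->] := gen_span y; rewrite linear_sum.
  under eq_bigr do rewrite linearZ.
  exact: span_sum.
pose phi y := submod_elt (span_submodule s) (f_in y).
have phi_lin : linear phi by move=> r u v; apply: val_inj; rewrite /= linearP.
apply: (serre_sub (f := linear_fun phi_lin)) (serre_span _ SK) => [y fy0|v _].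
  by apply: f_inj; rewrite linear0; exact: (congr1 val fy0).
exact: Scyc.
Qed.

End Serre.

Section Noetherian.
Variable R : comNzRingType.
Hypothesis noethR : noetherian_ring R.

Lemma ideal_sum (I : R -> Prop) n (d g : 'I_n -> R) :
  is_ideal I -> (forall i, I (g i)) -> I (\sum_(i < n) d i * g i).
Proof. by case=> I0 ID IM Ig; apply: big_ind => // i _; apply: IM. Qed.

Lemma noetherian_chain_stationary (c : nat -> R -> Prop) :
    (forall n, is_ideal (c n)) -> (forall n a, c n a -> c n.+1 a) ->
  exists n, forall a, c n.+1 a -> c n a.
Proof.
move=> c_ideal c_incr.
have c_mono n m : (n <= m)%N -> forall a, c n a -> c m a.
  by move=> /subnK <- a; elim: (m - n)%N => // k IH /IH /c_incr.
pose U a := exists n, c n a.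
have U_ideal : is_ideal U.
  split; first by exists 0%N; case: (c_ideal 0%N).
  - move=> a b [n an] [m bm]; exists (maxn n m); case: (c_ideal (maxn n m)) => _ cD _.
    by apply: cD; [apply: c_mono an; rewrite leq_maxl | apply: c_mono bm; rewrite leq_maxr].
  - by move=> r a [n an]; exists n; case: (c_ideal n) => _ _; apply.
have [k [g [Ug U_gen]]] := noethR U_ideal.
pose stage i := projT1 (cid (Ug i)).
have stageP i : c (stage i) (g i) by rewrite /stage; case: cid.
pose N := (\max_(i < k) stage i)%N.
exists N => a aN1; have [d ->] := (U_gen a).1 (ex_intro _ N.+1 aN1).
apply: ideal_sum => // i; apply: c_mono (stageP i); exact: leq_bigmax.
Qed.

Lemma noetherian_maximal (F : (R -> Prop) -> Prop) :
    (forall I, F I -> is_ideal I) -> (exists I, F I) ->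
  exists2 I, F I & forall J, F J -> (forall a, I a -> J a) -> forall a, J a -> I a.
Proof.
move=> F_ideal [I0 FI0]; apply: contrapT => no_max.
have larger (I : {I | F I}) : {J : {J | F J} | (forall a, sval I a -> sval J a) /\
    exists a, sval J a /\ ~ sval I a}.
  apply: cid; apply: contrapT => no_larger; apply: no_max.
  exists (sval I); first exact: svalP.
  move=> J FJ IJ a Ja; apply: contrapT => Ia; apply: no_larger.
  by exists (exist _ J FJ); split=> //; exists a.
pose chain n := iter n (fun I => sval (larger I)) (exist _ I0 FI0).
pose c n := sval (chain n).
have c_ideal n : is_ideal (c n) by apply: F_ideal; exact: svalP.
have c_incr n : forall a, c n a -> c n.+1 a := (svalP (larger (chain n))).1.
have [n cn] := noetherian_chain_stationary c_ideal c_incr.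
have [_ [a [a_next a_n]]] := svalP (larger (chain n)).
exact: a_n (cn a a_next).
Qed.

Lemma noetherian_max_ann (M : lmodType R) (Q : M -> Prop) :
    (exists m, Q m) ->
  exists2 m, Q m & forall m', Q m' -> (forall a, ann m a -> ann m' a) ->
    forall a, ann m' a -> ann m a.
Proof.
move=> [m0 Qm0].
pose F I := exists2 m, Q m & I = ann m.
have F_ideal I : F I -> is_ideal I by move=> [m _ ->]; exact: ann_ideal.
have [_ [m Qm ->] m_max] :=
  noetherian_maximal F_ideal (ex_intro _ _ (ex_intro2 _ _ m0 Qm0 erefl)).
by exists m => // m' Qm'; apply: m_max; exists m'.
Qed.

End Noetherian.

Section ModuleFacts.
Variable R : comNzRingType.

Lemma prime_ideal_expr (q : R -> Prop) (a : R) k :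
  prime_ideal q -> ~ q a -> ~ q (a ^+ k).
Proof.
case=> _ q1 q_prime qa; elim: k => [|k IH]; first by rewrite expr0.
by rewrite exprS => /q_prime [].
Qed.

Lemma fg_power_annihilator (N : lmodType R) (a : R) :
    module_fg N -> (forall n : N, exists k, ann n (a ^+ k)) ->
  exists k, forall n : N, ann n (a ^+ k).
Proof.
move=> [m [g g_gen]] a_tors.
pose ord i := projT1 (cid (a_tors (g i))).
have ordP i : ann (g i) (a ^+ ord i) by rewrite /ord; case: cid.
exists (\max_(i < m) ord i)%N => n; have [c ->] := g_gen n.
rewrite /ann scaler_sumr big1 // => i _; rewrite scaler_comm.
by rewrite -(subnK (leq_bigmax i)) exprD -scalerA ordP !scaler0.
Qed.

Lemma injective_module_divisible (E : lmodType R) (x : E) (s : R) :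
    injective_module E -> (forall r, r * s = 0 -> ann x r) ->
  exists e : E, s *: e = x.
Proof.
move=> E_inj s_x; have [phi phiP] := cyclic_hom (m := s : R^o) s_x.
have [h hP] := E_inj _ _ val phi val_inj.
exists (h 1); rewrite -linearZ /= [s *: _]mulr1.
have s_in : cyclic (s : R^o) s by exists 1; rewrite scale1r.
by rewrite -[s](submod_eltK (cyclic_submodule _) s_in) hP (phiP 1) ?scale1r.
Qed.

End ModuleFacts.

Section AssociatedPrime.
Variables (R : comNzRingType) (K : lmodType R) (p : R -> Prop) (k0 : K).
Hypotheses (noethR : noetherian_ring R) (p_prime : prime_ideal p).
Hypothesis ann_k0 : forall s, ann k0 s -> p s.
Hypothesis k0_torsion : forall b r, p b -> exists j, ann (r *: k0) (b ^+ j).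

Lemma associated_prime : exists2 k, cyclic k0 k & forall c, ann k c <-> p c.
Proof.
have [_ p1 p_mul] := p_prime.
pose Q k := cyclic k0 k /\ forall s, ann k s -> p s.
have Qk0 : Q k0 by split=> //; exists 1; rewrite scale1r.
have [k [[r ->] ann_k] k_max] := noetherian_max_ann noethR (ex_intro _ _ Qk0).
exists (r *: k0) => [|c]; first by exists r.
split=> [/ann_k // | pc]; apply: contrapT => not_ann_c.
have [_ _ cyclicZ] := cyclic_submodule k0.
have Q_power j : Q (c ^+ j *: (r *: k0)).
  elim: j => [|j [kj ann_kj]]; first by rewrite scale1r; split=> //; exists r.
  rewrite exprS -scalerA; split; first exact: cyclicZ.
  move=> s ann_s; apply: contrapT => ps; apply: not_ann_c.
  have Qs : Q (s *: (c ^+ j *: (r *: k0))).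
    split; first exact: cyclicZ.
    by move=> t; rewrite /ann scalerA => /ann_kj /p_mul [].
  apply: (k_max _ Qs); first by move=> a ann_a; do 2 apply: ann_scale_le.
  by rewrite /ann scaler_comm.
have [j kill] := k0_torsion r pc.
have [_ /(_ 1) ann1] := Q_power j.
by apply/p1/ann1; rewrite /ann scale1r.
Qed.

End AssociatedPrime.

Section InjectiveEnvelope.
Variables (R : comNzRingType) (p : R -> Prop) (E : lmodType R) (x : E).
Hypotheses (noethR : noetherian_ring R) (p_prime : prime_ideal p).
Hypothesis ann_x : forall c, ann x c <-> p c.
Hypothesis x_essential : forall N : E -> Prop, submodule N ->
  (exists n, N n /\ n <> 0) -> exists n, [/\ N n, cyclic x n & n <> 0].

Lemma envelope_prime_multiple (e : E) :
  e <> 0 -> exists t, t *: e <> 0 /\ forall c, ann (t *: e) c <-> p c.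
Proof.
move=> e_ne0; have e_in : cyclic e e by exists 1; rewrite scale1r.
have [_ [[t ->] [r te] te_ne0]] :=
  x_essential (cyclic_submodule e) (ex_intro _ e (conj e_in e_ne0)).
exists t; split=> // c; rewrite te in te_ne0 *.
have [[_ _ p_mulr] _ p_mul] := p_prime.
have pr : ~ p r by move/ann_x.
rewrite /ann scalerA; split=> [/ann_x /p_mul [] // | pc].
by apply/ann_x; rewrite mulrC; apply: p_mulr.
Qed.

Lemma envelope_torsion b : p b -> forall e : E, exists j, ann e (b ^+ j).
Proof.
move=> pb e; pose Q f := exists j, f = b ^+ j *: e.
have [_ [j ->] f_max] :=
  noetherian_max_ann noethR (ex_intro Q e (ex_intro _ 0%N (esym (scale1r e)))).
exists j; apply: contrapT => /envelope_prime_multiple [t [tf_ne0 ann_tf]].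
apply/tf_ne0/(f_max (b *: (b ^+ j *: e))); first by exists j.+1; rewrite exprS scalerA.
- by move=> c; apply: ann_scale_le.
- by rewrite /ann scaler_comm; apply/ann_tf.
Qed.

Section EnvelopeSerre.
Variables (S : lmodType R -> Prop) (K : lmodType R).
Hypotheses (hS : serre_subcategory S) (SK : S K).

Lemma envelope_cyclic_serre :
  S (cyclic_mod x) -> forall e : E, S (cyclic_mod e).
Proof.
move=> Sx; apply: contrapT => /existsNP [e0 Se0].
have [e Se e_max] := noetherian_max_ann noethR
  (ex_intro (fun e => ~ S (cyclic_mod e)) e0 Se0).
have e_ne0 : e <> 0.
  move=> e_eq0; apply: Se; apply: (serre_trivial hS) SK => a; apply: val_inj.
  by have [r ->] := submod_valP a; rewrite e_eq0 scaler0.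
have [t [te_ne0 ann_te]] := envelope_prime_multiple e_ne0.
have S_te : S (cyclic_mod (t *: e)).
  have x_in : cyclic x x by exists 1; rewrite scale1r.
  apply: (serre_cyclic_ann hS (n := submod_elt _ x_in)) Sx => c.
  by rewrite ann_submod_elt ann_x ann_te.
have [[p0 pD pM] _ _] := p_prime.
have [n [g [pg p_gen]]] := noethR (And3 p0 pD pM).
have S_ge i : S (cyclic_mod (g i *: e)).
  apply: contrapT => S_ge; apply/te_ne0/(e_max _ S_ge) => [c|].
    exact: ann_scale_le.
  by rewrite /ann scaler_comm; apply/ann_te.
have S_span := serre_span hS (s := map (fun i => g i *: e) (index_enum 'I_n)) _ SK.
apply: Se; apply: (serre_cyclic_extension hS) S_te.
apply: (serre_submod_le hS _ (S_span _)) => [_ [c /ann_te /p_gen [d ->] ->] |].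
  rewrite scaler_suml; under eq_bigr do rewrite -scalerA.
  exact: span_sum.
by move=> _ /mapP [i _ ->].
Qed.

Lemma envelope_generator_serre_of_height_pos (N : lmodType R)
    (f : {linear N -> E}) (g : {linear E -> K}) :
  injective_module E -> short_exact f g -> module_fg N -> height_pos p ->
  S (cyclic_mod x).
Proof.
move=> E_inj [f_inj g_surj g_ker] N_fg [c [c_prime [c_strict c_top]]].
have [q_p [a [qa nqa]]] := c_strict 0%N isT.
have pa : p a by apply/c_top.
have [m am_N] : exists m, forall n : N, ann n (a ^+ m).
  apply: (fg_power_annihilator N_fg) => n; have [j aj] := envelope_torsion pa (f n).
  by exists j; apply: f_inj; rewrite linearZ linear0.
have [e0 e0x] : exists e0, a ^+ m *: e0 = x.
  apply: (injective_module_divisible E_inj) => r ram; apply/ann_x/c_top/q_p.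
  have [[q0 _ _] _ q_mul] := c_prime 0%N isT.
  have : c 0%N (r * a ^+ m) by rewrite ram.
  by case/q_mul=> // /(prime_ideal_expr (c_prime 0%N isT) nqa).
have ann_ge0 s : ann (g e0) s -> p s.
  rewrite /ann -linearZ => /g_ker [n fn]; apply/ann_x.
  by rewrite /ann -e0x scaler_comm -fn -linearZ am_N linear0.
have ge0_torsion b r : p b -> exists j, ann (r *: g e0) (b ^+ j).
  move=> pb; have [j bj] := envelope_torsion pb (r *: e0).
  by exists j; rewrite /ann scalerA -linearZ -scalerA bj linear0.
have [k _ ann_k] := associated_prime noethR p_prime ann_ge0 ge0_torsion.
by apply: (serre_cyclic_ann hS (n := k)) SK => s; rewrite ann_x ann_k.
Qed.

End EnvelopeSerre.
End InjectiveEnvelope.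

Theorem proposition4p4 (R : comNzRingType) (S : lmodType R -> Prop)
    (p : R -> Prop) (E : lmodType R) :
  noetherian_ring R ->
  serre_subcategory S ->
  prime_ideal p ->
  injective_envelope_Rp p E ->
  NS_class S E ->
  (height_pos p \/ (height_zero p /\ exists M : lmodType R, iso_R_mod M p /\ S M)) ->
  S E.
Proof.
move=> noethR hS p_prime [E_inj [x [ann_x x_ess]]] [N [K [f [g [fg_exact N_fg SK]]]]].
move=> ht_cases; have [f_inj _ _] := fg_exact.
have Sx : S (cyclic_mod x).
  case: ht_cases => [p_pos | [_ [M [[m [_ ann_m]] SM]]]].
    exact: (envelope_generator_serre_of_height_pos noethR p_prime ann_x x_ess hS SK
      E_inj fg_exact N_fg p_pos).
  apply: (serre_cyclic_ann hS (n := m)) SM => c.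
  exact: iff_trans (ann_x c) (iff_sym (ann_m c)).
have Scyc := envelope_cyclic_serre noethR p_prime ann_x x_ess hS SK Sx.
have SN := serre_fg hS Scyc SK N_fg f_inj.
by case: hS => _ _ ext; apply: (ext _ _ _ f g).
Qed.
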